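(* Let $T$ be a light tournament and let $z$ be a vertex of $T$ of minimum in-degree. Then the subtournament $T[V_2(z)]$ induced by the in-neighborhood of $z$ is $\mathcal{T}_5$-free.
   Context: A triangle of a tournament is a set of three vertices inducing a directed 3-cycle. An unordered pair $ab$ of vertices is a diagonal if there exist vertices $u,v$ with $\{u,v,a\}$ and $\{u,v,b\}$ both triangles. A triangle is heavy if at least two of its pairs are diagonals; a tournament is light if it has no heavy triangle. $V_2(z)=\{v: (v,z)\in A(T)\}$. A feedback vertex set of a tournament is a vertex set whose removal leaves an acyclic tournament. $\mathcal{T}_5$ is the set of tournaments on 5 vertices whose minimum feedback vertex set has size 2; a tournament is $\mathcal{T}_5$-free if it has no subtournament isomorphic to a member of $\mathcal{T}_5$. *)

From mathcomp Require Import all_boot.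
Set Implicit Arguments. Unset Strict Implicit. Unset Printing Implicit Defensive.

(* A tournament on the finite vertex type T, with arc relation A (A u v : u -> v). *)
Definition is_tournament (T : finType) (A : rel T) : Prop :=
  (forall u, ~~ A u u) /\
  (forall u v, u != v -> (A u v || A v u) && ~~ (A u v && A v u)).

Definition triangle (T : finType) (A : rel T) (a b c : T) : bool :=
  (A a b && A b c && A c a) || (A b a && A c b && A a c).

Definition diagonal (T : finType) (A : rel T) (a b : T) : bool :=
  (a != b) && [exists u, exists v, triangle A u v a && triangle A u v b].

Definition heavy (T : finType) (A : rel T) (a b c : T) : bool :=
  triangle A a b c &&
  ((diagonal A a b && diagonal A b c) || (diagonal A b c && diagonal A c a)
   || (diagonal A c a && diagonal A a b)).

Definition light (T : finType) (A : rel T) : Prop :=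
  forall a b c, ~~ heavy A a b c.

Definition indeg (T : finType) (A : rel T) (v : T) : nat := #|[set u | A u v]|.

Definition V2 (T : finType) (A : rel T) (z : T) : {set T} := [set v | A v z].

Definition acyclic_on (T : finType) (A : rel T) (W : {set T}) : bool :=
  let e := [rel u v | [&& u \in W, v \in W & A u v]] in
  ~~ [exists x in W, exists y in W, A x y && connect e y x].

Definition is_fvs (T : finType) (A : rel T) (S F : {set T}) : bool :=
  (F \subset S) && acyclic_on A (S :\: F).

Definition min_fvs_is_two (T : finType) (A : rel T) (S : {set T}) : Prop :=
  (exists F : {set T}, is_fvs A S F /\ #|F| = 2) /\
  (forall F : {set T}, is_fvs A S F -> 2 <= #|F|).

Definition T5_free (T : finType) (A : rel T) (X : {set T}) : Prop :=
  forall S : {set T}, S \subset X -> #|S| = 5 -> ~ min_fvs_is_two A S.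

From mathcomp Require Import all_boot.
Set Implicit Arguments. Unset Strict Implicit.

(* We prove more than T_5-freeness: the in-neighbourhood V2(z)
   of a vertex z of minimum in-degree induces a TRANSITIVE subtournament.
   1. Minimality of the in-degree forces every x in V2(z) to be reached from
      z by a path z -> y -> x (otherwise x has fewer in-neighbours than z).
   2. Using these return paths, each arc p -> q inside V2(z) produces a
      diagonal pq or a diagonal zq, and two diagonals zp, zq produce the
      diagonal pq (lightness rules out the remaining configuration).
   3. A directed triangle inside V2(z) would then carry two diagonals, i.e.
      be heavy; so V2(z) contains no directed triangle and is transitive.
   4. A transitive vertex set induces an acyclic subtournament, so for every
      5-set S inside V2(z) the empty set is a feedback vertex set of T[S],
      and the minimum feedback vertex set of T[S] cannot have size 2. *)

Section Tournament.
Variables (T : finType) (A : rel T).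
Hypothesis hT : is_tournament A.

Lemma arc_irrefl u : ~~ A u u.
Proof. by case: hT. Qed.

Lemma arc_neq u v : A u v -> u != v.
Proof. by move=> huv; apply: contraTneq huv => ->; apply: arc_irrefl. Qed.

Lemma arc_asym u v : A u v -> A v u -> False.
Proof.
move=> huv hvu; case: hT => _ /(_ u v (arc_neq huv)) /andP [_].
by rewrite huv hvu.
Qed.

Lemma arc_total u v : u != v -> ~~ A u v -> A v u.
Proof.
move=> neq huv; case: hT => _ /(_ u v neq) /andP [].
by rewrite (negbTE huv).
Qed.

Lemma triangleI a b c : A a b -> A b c -> A c a -> triangle A a b c.
Proof. by move=> hab hbc hca; rewrite /triangle hab hbc hca. Qed.

Lemma diagonal_sym a b : diagonal A a b -> diagonal A b a.
Proof.
case/andP=> neq /existsP [u /existsP [v /andP [hua hub]]].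
rewrite /diagonal eq_sym neq; apply/existsP; exists u; apply/existsP; exists v.
by rewrite hua hub.
Qed.

Lemma diagonalI a b u v : a != b -> triangle A u v a -> triangle A u v b ->
  diagonal A a b.
Proof.
move=> neq hua hub; rewrite /diagonal neq.
by apply/existsP; exists u; apply/existsP; exists v; rewrite hua hub.
Qed.

Lemma diagonal_common_tail z y a b : A z y -> A y a -> A y b ->
  A a z -> A b z -> a != b -> diagonal A a b.
Proof.
by move=> hzy hya hyb haz hbz neq; apply: (diagonalI (u:=z) (v:=y)) => //;
  apply: triangleI.
Qed.

Lemma diagonal_z_head z y a b : A z y -> A y a -> A a b -> A b y ->
  A a z -> A b z -> diagonal A z b.
Proof.
move=> hzy hya hab hby haz hbz; apply: (diagonalI (u:=y) (v:=a)).
- by rewrite eq_sym; apply: arc_neq.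
- exact: triangleI.
- exact: triangleI.
Qed.

Lemma diagonal_z_out z y y' q : A z y -> A z y' -> A y y' -> A y' q ->
  A q y -> A q z -> diagonal A z y.
Proof.
move=> hzy hzy' hyy' hy'q hqy hqz; apply: (diagonalI (u:=y') (v:=q)).
- exact: arc_neq.
- exact: triangleI.
- exact: triangleI.
Qed.

(* If the arcs inside W form a transitive relation, T[W] is acyclic: a cycle
   would collapse, by transitivity, to a loop or to a pair of opposite arcs. *)
Lemma acyclic_on_of_transitive (W : {set T}) :
  (forall u v w, u \in W -> v \in W -> w \in W -> A u v -> A v w -> A u w) ->
  acyclic_on A W.
Proof.
move=> transW; set e := [rel u v | [&& u \in W, v \in W & A u v]].
have e_trans : transitive e.
  move=> v u w /and3P [uW vW huv] /and3P [_ wW hvw].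
  by rewrite /= uW wW (transW u v w).
apply/negP => /exists_inP [x xW /exists_inP [y yW /andP [hxy]]].
case/connectP => p pth xlast; rewrite {}xlast in hxy.
case: p hxy pth => [|a p] hxy; first by move: (arc_irrefl y); rewrite hxy.
rewrite (path_sortedE e_trans) => /andP [/allP ey _].
by move: (ey _ (mem_last a p)) => /and3P [_ _ /(arc_asym hxy)].
Qed.

(* An acyclic vertex set has the empty feedback vertex set. *)
Lemma acyclic_not_min_fvs_two (S : {set T}) :
  acyclic_on A S -> ~ min_fvs_is_two A S.
Proof.
move=> acS [_ /(_ set0)]; rewrite cards0 /is_fvs sub0set setD0 acS.
by move/(_ isT).
Qed.

Section MinInDegree.
Variable z : T.
Hypothesis hl : light A.
Hypothesis hz : forall w : T, indeg A z <= indeg A w.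

(* Step 1: every in-neighbour x of z is reached back as z -> y -> x, since
   otherwise N^-(x) would be contained in N^-(z) \ {x}. *)
Lemma return_path x : A x z -> exists y, A z y && A y x.
Proof.
move=> hxz; apply/existsP; apply: contraT => noret.
have sub : [set u | A u x] \subset [set u | A u z] :\ x.
  apply/subsetP => u; rewrite !inE => hux; rewrite (arc_neq hux) /=.
  have neq : u != z by apply: contraTneq hux => ->; apply/negP => /(arc_asym hxz).
  apply: contraT => huz; move: noret; rewrite negb_exists => /forallP /(_ u).
  by rewrite (arc_total neq huz) hux.
have := leq_trans (hz x) (subset_leq_card sub).
by rewrite /indeg (cardsD1 x) inE hxz ltnn.
Qed.

Lemma light_two_diagonals a b c : triangle A a b c -> diagonal A a b ->
  diagonal A b c -> False.
Proof. by move=> habc hab hbc; move: (hl a b c); rewrite /heavy habc hab hbc. Qed.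

Lemma light_at_z y a : A z y -> A y a -> A a z -> diagonal A z y ->
  diagonal A z a -> False.
Proof.
move=> hzy hya haz hzy_d hza_d; move: (hl z y a).
by rewrite /heavy (triangleI hzy hya haz) hzy_d (diagonal_sym hza_d) !orbT.
Qed.

Lemma arc_in_V2_diagonal p q : A p z -> A q z -> A p q ->
  diagonal A p q \/ diagonal A z q.
Proof.
move=> hpz hqz hpq; have [y /andP [hzy hyp]] := return_path hpz.
have [hyq | hyq] := boolP (A y q).
  by left; apply: (diagonal_common_tail hzy hyp hyq hpz hqz (arc_neq hpq)).
have neq : y != q by apply: contraTneq hzy => ->; apply/negP => /(arc_asym hqz).
by right; apply: (diagonal_z_head hzy hyp hpq (arc_total neq hyq) hpz hqz).
Qed.

Lemma diagonal_through_z p q : A p z -> A q z -> p != q ->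
  diagonal A z p -> diagonal A z q -> diagonal A p q.
Proof.
move=> hpz hqz neq dzp dzq.
have [yp /andP [hzyp hypp]] := return_path hpz.
have [yq /andP [hzyq hyqq]] := return_path hqz.
have [hypq | hqyp] := boolP (A yp q).
  exact: (diagonal_common_tail hzyp hypp hypq hpz hqz neq).
have [hyqp | hpyq] := boolP (A yq p).
  by apply/diagonal_sym/(diagonal_common_tail hzyq hyqq hyqp hqz hpz); rewrite eq_sym.
have {}hqyp : A q yp.
  by apply: arc_total hqyp; apply: contraTneq hzyp => ->; apply/negP => /(arc_asym hqz).
have {}hpyq : A p yq.
  by apply: arc_total hpyq; apply: contraTneq hzyq => ->; apply/negP => /(arc_asym hpz).
have ypq : yp != yq by apply: contraTneq hypp => ->; apply/negP => /(arc_asym hpyq).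
exfalso; have [hyy | hyy] := boolP (A yp yq).
  exact: (light_at_z hzyp hypp hpz (diagonal_z_out hzyp hzyq hyy hyqq hqyp hqz) dzp).
exact: (light_at_z hzyq hyqq hqz
  (diagonal_z_out hzyq hzyp (arc_total ypq hyy) hypp hpyq hpz) dzq).
Qed.

(* By Step 2a each side gives a
   diagonal on it or from z; at most one side diagonal is allowed, so two of
   za, zb, zc hold, and Step 2b turns them into a second side diagonal. *)
Lemma V2_no_triangle a b c : A a z -> A b z -> A c z ->
  A a b -> A b c -> A c a -> False.
Proof.
move=> haz hbz hcz hab hbc hca.
have H1 := light_two_diagonals (triangleI hab hbc hca).
have H2 := light_two_diagonals (triangleI hbc hca hab).
have H3 := light_two_diagonals (triangleI hca hab hbc).
have D1 := arc_in_V2_diagonal haz hbz hab.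
have D2 := arc_in_V2_diagonal hbz hcz hbc.
have D3 := arc_in_V2_diagonal hcz haz hca.
have C1 := diagonal_through_z haz hbz (arc_neq hab).
have C2 := diagonal_through_z hbz hcz (arc_neq hbc).
have C3 := diagonal_through_z hcz haz (arc_neq hca).
tauto.
Qed.

Lemma V2_transitive u v w : A u z -> A v z -> A w z -> A u v -> A v w -> A u w.
Proof.
move=> huz hvz hwz huv hvw; apply: contraT => huw.
have neq : u != w by apply: contraTneq huv => ->; apply/negP => /(arc_asym hvw).
by case: (V2_no_triangle huz hvz hwz huv hvw (arc_total neq huw)).
Qed.

End MinInDegree.
End Tournament.

Theorem lemma6 (T : finType) (A : rel T) (hT : is_tournament A) (hl : light A)
  (z : T) (hz : forall w : T, indeg A z <= indeg A w) :
  T5_free A (V2 A z).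
Proof.
move=> S sSV _.
have inV2 x : x \in S -> A x z.
  by move=> xS; move/subsetP: sSV => /(_ x xS); rewrite inE.
have acS : acyclic_on A S.
  apply: (acyclic_on_of_transitive hT) => u v w uS vS wS.
  exact: (V2_transitive hT hl hz (inV2 u uS) (inV2 v vS) (inV2 w wS)).
exact: (acyclic_not_min_fvs_two acS).
Qed.
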